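(* Let $\mathcal A=\{1,\dots,I\}$ with $I\ge1$, let $d_a\ge1$ be integers for $a\in\mathcal A$ and $d_0,d_\infty\ge0$ integers; let $\hat{\mathcal A}$ be $\mathcal A$ together with $0$ if $d_0>0$ and $\infty$ if $d_\infty>0$; let $x_a,s_a$ ($a\in\mathcal A$) be reals with $0<|x_a|<1$, and set $x_0=1$, $s_0=d_0+1$, $x_\infty=-1$, $s_\infty=-(d_\infty+1)$; set $m=\sum_{a\in\hat{\mathcal A}}d_a+1$, $p_c(t)=\prod_{a\in\hat{\mathcal A}}(1+x_at)^{d_a}$ and, for $c\in(-1,1)$, $$\beta_{r,k}(c)=\int_{-1}^1\Big(\sum_{a\in\hat{\mathcal A}}\frac{x_ad_as_a}{1+x_at}\Big)p_c(t)t^r(ct+1)^k\,dt+\big((-1)^r(1-c)^kp_c(-1)+(1+c)^kp_c(1)\big).$$ Then for any integer $l\ge m$, $$\beta_{0,-l}=\frac{\gamma_0(c)+o(1-c)}{(1-c)^{l-d_0}}=\frac{\gamma_\infty(c)+o(1+c)}{(1+c)^{l-d_\infty}},$$ where $\gamma_0$ and $\gamma_\infty$ are smooth functions defined on open neighbourhoods of $c=1$ and $c=-1$ respectively, with $\gamma_0(1)>0$ and $\gamma_\infty(-1)>0$.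
   Context: Here $o(x)$ denotes a function which is smooth in a neighbourhood of $x=0$ and satisfies $o(0)=0$ (different occurrences may denote different such functions); the equalities hold for $c\in(-1,1)$ near $1$, resp. near $-1$. In the paper these quantities arise from admissible data over a local product of nonnegative CSCK metrics, where $s_a$ is the normalized scalar curvature ($\pm g_a$ has scalar curvature $\pm2d_as_a$) and $x_a$ has the sign of $g_a$. *)

From Stdlib Require Import Reals ZArith.
From Coquelicot Require Import Coquelicot.
Open Scope R_scope.

Fixpoint sum_upto (n : nat) (f : nat -> R) : R :=
  match n with O => 0 | S k => sum_upto k f + f k end.
Fixpoint prod_upto (n : nat) (f : nat -> R) : R :=
  match n with O => 1 | S k => prod_upto k f * f k end.

(* The index set A = {1..I} is encoded as {0..I-1}; the extra indices 0 and
   infinity of \hat A carry x_0 = 1, s_0 = d0+1, x_inf = -1, s_inf = -(dinf+1).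
   When d0 = 0 (resp. dinf = 0) the corresponding terms below are literally
   0 (resp. factor 1), so including them unconditionally is exactly the same
   as summing/multiplying over \hat A. *)

Definition m_of (I : nat) (d : nat -> nat) (d0 dinf : nat) : nat :=
  (List.fold_right Nat.add 0 (List.map d (List.seq 0 I)) + d0 + dinf + 1)%nat.

Definition pc (I : nat) (x : nat -> R) (d : nat -> nat) (d0 dinf : nat) (t : R) : R :=
  prod_upto I (fun a => (1 + x a * t) ^ (d a)) * (1 + 1 * t) ^ d0 * (1 + (-1) * t) ^ dinf.

Definition Ssum (I : nat) (x s : nat -> R) (d : nat -> nat) (d0 dinf : nat) (t : R) : R :=
  sum_upto I (fun a => x a * INR (d a) * s a / (1 + x a * t))
  + 1 * INR d0 * (INR d0 + 1) / (1 + 1 * t)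
  + (-1) * INR dinf * (- (INR dinf + 1)) / (1 + (-1) * t).

Definition beta (I : nat) (x s : nat -> R) (d : nat -> nat) (d0 dinf : nat)
    (r : nat) (k : Z) (c : R) : R :=
  RInt (fun t => Ssum I x s d d0 dinf t * pc I x d d0 dinf t * t ^ r * powerRZ (c * t + 1) k)
       (-1) 1
  + ((-1) ^ r * powerRZ (1 - c) k * pc I x d d0 dinf (-1)
     + powerRZ (1 + c) k * pc I x d d0 dinf 1).

Definition smooth_near (f : R -> R) (x0 : R) : Prop :=
  exists eps : R, 0 < eps /\
    forall (n : nat) (y : R), Rabs (y - x0) < eps -> ex_derive_n f n y.

From Stdlib Require Import Reals ZArith Lia Lra Psatz List.
From Coquelicot Require Import Coquelicot.
Open Scope R_scope.

(* Near t = -1 the integrand of [beta] factors as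
   S(t) p_c(t) = (1 + t)^(d0 - 1) P(t), where P is a polynomial of degree
   < m - d0 with P(-1) = d0 (d0 + 1) q(-1) > 0, q being p_c without its factor
   (1 + t)^d0.  Expanding P in powers of 1 + t, each term integrates to
     int_{-1}^1 (1 + t)^j / (1 + c t)^l dt = M(c) / (1 - c)^(l - j - 1)
   with M rational, regular at c = 1 and M(1) a Beta integral, hence positive.
   So (1 - c)^(l - d0) beta(c) is a rational function of c which is positive
   at c = 1; when d0 = 0 it is the boundary term p_c(-1) / (1 - c)^l that
   carries the leading order.  The substitution t -> -t exchanges d0 with
   dinf and x_a with -x_a, and gives the expansion at c = -1. *)

(** * Rational functions regular on (0, +oo) *)

(* Closed under differentiation (ratpos_is_derive), so all its members are
   smooth near 1. *)
Inductive ratpos : (R -> R) -> Prop :=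
| ratpos_const a : ratpos (fun _ => a)
| ratpos_id : ratpos (fun y => y)
| ratpos_plus f g : ratpos f -> ratpos g -> ratpos (fun y => f y + g y)
| ratpos_mult f g : ratpos f -> ratpos g -> ratpos (fun y => f y * g y)
| ratpos_inv f : ratpos f -> (forall y, 0 < y -> f y <> 0) -> ratpos (fun y => / f y)
| ratpos_ext f g : ratpos f -> (forall y, 0 < y -> f y = g y) -> ratpos g.

Lemma ratpos_opp f : ratpos f -> ratpos (fun y => - f y).
Proof.
  intros Hf. apply (ratpos_ext (fun y => -1 * f y)); [|intros; ring].
  apply ratpos_mult; [apply ratpos_const | exact Hf].
Qed.

Lemma ratpos_minus f g : ratpos f -> ratpos g -> ratpos (fun y => f y - g y).
Proof. intros Hf Hg. apply ratpos_plus; [exact Hf | now apply ratpos_opp]. Qed.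

Lemma ratpos_pow f k : ratpos f -> ratpos (fun y => f y ^ k).
Proof.
  intros Hf. induction k as [|k IH]; [exact (ratpos_const 1) | now apply ratpos_mult].
Qed.

Lemma ratpos_one_minus : ratpos (fun y => 1 - y).
Proof. apply ratpos_minus; [apply ratpos_const | apply ratpos_id]. Qed.

Lemma ratpos_inv_one_plus : ratpos (fun y => / (1 + y)).
Proof.
  apply ratpos_inv; [apply ratpos_plus; [apply ratpos_const | apply ratpos_id] |].
  intros y Hy; lra.
Qed.

Lemma locally_pos y : 0 < y -> locally y (fun z => 0 < z).
Proof. intros Hy. exact (open_gt 0 y Hy). Qed.

Lemma ratpos_is_derive f :
  ratpos f -> exists f', ratpos f' /\ forall y, 0 < y -> is_derive f y (f' y).
Proof.
  induction 1 as [a| |f g _ [f' [Hf' Df]] _ [g' [Hg' Dg]]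
                 |f g Hf [f' [Hf' Df]] Hg [g' [Hg' Dg]]
                 |f Hf [f' [Hf' Df]] Hnz |f g _ [f' [Hf' Df]] Efg].
  - exists (fun _ => 0). split; [apply ratpos_const|]. intros y _. auto_derive; reflexivity.
  - exists (fun _ => 1). split; [apply ratpos_const|]. intros y _. auto_derive; reflexivity.
  - exists (fun y => f' y + g' y). split; [now apply ratpos_plus|].
    intros y Hy. apply is_derive_Reals, derivable_pt_lim_plus; apply is_derive_Reals; auto.
  - exists (fun y => f' y * g y + f y * g' y).
    split; [apply ratpos_plus; apply ratpos_mult; assumption|].
    intros y Hy. eapply is_derive_ext; [reflexivity|].
    eapply is_derive_Reals, derivable_pt_lim_mult; apply is_derive_Reals; auto.
  - exists (fun y => - (f' y * (/ f y * / f y))).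
    split; [apply ratpos_opp, ratpos_mult, ratpos_mult; try apply ratpos_inv; assumption|].
    intros y Hy. specialize (Hnz y Hy).
    replace (- (f' y * (/ f y * / f y))) with (- f' y / f y ^ 2) by (field; exact Hnz).
    apply is_derive_inv; [apply Df|]; assumption.
  - exists f'. split; [exact Hf'|]. intros y Hy.
    apply (is_derive_ext_loc f g); [|now apply Df].
    now apply (filter_imp _ _ Efg), locally_pos.
Qed.

Lemma ratpos_Derive_n f n :
  ratpos f -> exists h, ratpos h /\
    forall y, 0 < y -> Derive_n f n y = h y /\ ex_derive_n f n y.
Proof.
  intros Hf. induction n as [|n [h [Hh Eh]]].
  - exists f. split; [exact Hf|]. intros y _. split; reflexivity.
  - destruct (ratpos_is_derive h Hh) as [h' [Hh' Dh]].
    exists h'. split; [exact Hh'|]. intros y Hy.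
    assert (Loc : locally y (fun z => h z = Derive_n f n z)).
    { apply (filter_imp (fun z => 0 < z)); [|now apply locally_pos].
      intros z Hz. symmetry. now apply Eh. }
    split; simpl.
    + rewrite <- (Derive_ext_loc _ _ _ Loc). now apply is_derive_unique, Dh.
    + apply (ex_derive_ext_loc _ _ _ Loc). exists (h' y). now apply Dh.
Qed.

Lemma ratpos_smooth_near f : ratpos f -> smooth_near f 1.
Proof.
  intros Hf. exists 1. split; [lra|]. intros n y Hy.
  destruct (ratpos_Derive_n f n Hf) as [h [_ Eh]].
  apply Eh. apply Rabs_def2 in Hy. lra.
Qed.

Lemma locally_Rabs_lt x0 eps y :
  Rabs (y - x0) < eps -> locally y (fun z => Rabs (z - x0) < eps).
Proof.
  intros Hy. apply Rabs_def2 in Hy.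
  apply (filter_imp (fun z => x0 - eps < z /\ z < x0 + eps)).
  - intros z Hz. apply Rabs_def1; lra.
  - apply filter_and; [apply (open_gt (x0 - eps)) | apply (open_lt (x0 + eps))]; lra.
Qed.

Lemma smooth_near_comp_opp f x0 :
  smooth_near f x0 -> smooth_near (fun y => f (- y)) (- x0).
Proof.
  intros [eps [Heps Hf]]. exists eps. split; [exact Heps|]. intros n y Hy.
  apply ex_derive_n_comp_opp.
  apply (filter_imp (fun z => Rabs (z - x0) < eps)); [intros z Hz k _; now apply Hf|].
  apply locally_Rabs_lt.
  replace (- y - x0) with (- (y - - x0)) by ring. now rewrite Rabs_Ropp.
Qed.

Fixpoint moment (j n : nat) (c : R) : R :=
  match j with
  | O => (1 - ((1 - c) / (1 + c)) ^ S n) / (c * INR (S n))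
  | S j => (moment j n c - moment j (S n) c) / c
  end.

Lemma is_RInt_ext_pm1 (f g : R -> R) (v : R) :
  (forall t, -1 < t < 1 -> f t = g t) -> is_RInt f (-1) 1 v -> is_RInt g (-1) 1 v.
Proof.
  intros E. apply is_RInt_ext. intros t Ht.
  rewrite Rmin_left, Rmax_right in Ht by lra. now apply E.
Qed.

Lemma is_RInt_moment_0 n c : 0 < c < 1 ->
  is_RInt (fun t => / (1 + c * t) ^ (n + 2)) (-1) 1 (moment 0 n c / (1 - c) ^ S n).
Proof.
  intros Hc.
  assert (HN : 0 < INR (S n)) by apply lt_0_INR, Nat.lt_0_succ.
  remember (INR (S n)) as N eqn:EN.
  assert (Hpos : forall t, Rmin (-1) 1 <= t <= Rmax (-1) 1 -> 0 < 1 + c * t).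
  { intros t Ht. rewrite Rmin_left, Rmax_right in Ht by lra. nra. }
  set (F t := - / (c * N * (1 + c * t) ^ S n)).
  assert (E : moment 0 n c / (1 - c) ^ S n = F 1 - F (-1)).
  { unfold F, moment. rewrite <- EN. unfold Rdiv; rewrite Rpow_mult_distr, pow_inv, !Rmult_1_r.
    replace (1 + c * -1) with (1 - c) by ring.
    field; repeat split; try apply pow_nonzero; lra. }
  rewrite E. apply (is_RInt_derive F).
  - intros t Ht. specialize (Hpos t Ht). unfold F. auto_derive.
    + change ((1 + c * t) * (1 + c * t) ^ n) with ((1 + c * t) ^ S n).
      apply Rmult_integral_contrapositive_currified; [nra | apply pow_nonzero; lra].
    + change (match n with O => 1 | S _ => INR n + 1 end) with (INR (S n)).
      rewrite <- EN. replace (n + 2)%nat with (S (S n)) by lia. simpl pow.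
      field; repeat split; try apply pow_nonzero; lra.
  - intros t Ht. specialize (Hpos t Ht).
    apply (ex_derive_continuous (K := R_AbsRing) (V := R_NormedModule)).
    auto_derive. now apply pow_nonzero; lra.
Qed.

Lemma is_RInt_moment j n c : 0 < c < 1 ->
  is_RInt (fun t => (1 + t) ^ j / (1 + c * t) ^ (n + j + 2)) (-1) 1
          (moment j n c / (1 - c) ^ S n).
Proof.
  intros Hc. revert n. induction j as [|j IH]; intros n.
  - eapply is_RInt_ext_pm1; [|exact (is_RInt_moment_0 n c Hc)].
    intros t _. rewrite Nat.add_0_r. unfold Rdiv. simpl pow. now rewrite Rmult_1_l.
  - (* [c (1 + t) = (1 + c t) - (1 - c)] lowers the power of [1 + t]. *)
    assert (H := is_RInt_scal _ _ _ (/ c) _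
                   (is_RInt_minus _ _ _ _ _ _ (IH n) (is_RInt_scal _ _ _ (1 - c) _ (IH (S n))))).
    replace (moment (S j) n c / (1 - c) ^ S n) with
      (scal (/ c) (minus (moment j n c / (1 - c) ^ S n)
                         (scal (1 - c) (moment j (S n) c / (1 - c) ^ S (S n))))).
    2:{ unfold scal, minus, plus, opp; simpl; unfold mult; simpl.
        field; repeat split; try apply pow_nonzero; lra. }
    eapply is_RInt_ext_pm1; [|exact H].
    intros t Ht. assert (0 < 1 + c * t) by nra.
    unfold scal, minus, plus, opp; simpl; unfold mult; simpl.
    replace (S n + j + 2)%nat with (S (n + j + 2)) by lia.
    replace (n + S j + 2)%nat with (S (n + j + 2)) by lia.
    simpl pow. field; repeat split; try apply pow_nonzero; lra.
Qed.

Lemma moment_at_1 j n :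
  moment j n 1 = INR (fact j) * INR (fact n) / INR (fact (n + j + 1)).
Proof.
  revert n. induction j as [|j IH]; intros n; cbn [moment].
  - replace (n + 0 + 1)%nat with (S n) by lia.
    replace ((1 - 1) / (1 + 1)) with 0 by field. rewrite pow_i by lia.
    rewrite fact_simpl, mult_INR. simpl (INR (fact 0)).
    field. split; [apply INR_fact_neq_0 | apply not_0_INR; lia].
  - rewrite !IH.
    replace (n + S j + 1)%nat with (S (n + j + 1)) by lia.
    replace (S n + j + 1)%nat with (S (n + j + 1)) by lia.
    rewrite !fact_simpl, !mult_INR, (S_INR (n + j + 1)).
    replace (INR (n + j + 1) + 1) with (INR (S n) + INR (S j))
      by (rewrite <- plus_INR, <- S_INR; f_equal; lia).
    field. repeat split; try apply INR_fact_neq_0.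
    rewrite <- plus_INR. apply not_0_INR. lia.
Qed.

Lemma moment_at_1_pos j n : 0 < moment j n 1.
Proof.
  rewrite moment_at_1. apply Rdiv_lt_0_compat; [apply Rmult_lt_0_compat|];
    apply lt_0_INR, lt_O_fact.
Qed.

Lemma ratpos_moment j n : ratpos (moment j n).
Proof.
  revert n. induction j as [|j IH]; intros n; cbn [moment]; unfold Rdiv.
  - apply ratpos_mult.
    + apply ratpos_minus; [apply ratpos_const|].
      apply ratpos_pow, ratpos_mult; [apply ratpos_one_minus | apply ratpos_inv_one_plus].
    + apply ratpos_inv; [apply ratpos_mult; [apply ratpos_id | apply ratpos_const]|].
      intros y Hy. apply Rmult_integral_contrapositive_currified; [lra|].
      apply not_0_INR. lia.
  - apply ratpos_mult; [now apply ratpos_minus|].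
    apply ratpos_inv; [apply ratpos_id | intros y Hy; lra].
Qed.

(** * Polynomials in 1 + t *)

Fixpoint horner (p : list R) (u : R) : R :=
  match p with nil => 0 | a :: q => a + u * horner q u end.

Fixpoint padd (p q : list R) : list R :=
  match p, q with
  | nil, _ => q
  | _, nil => p
  | a :: p', b :: q' => (a + b) :: padd p' q'
  end.

Definition pscal (k : R) (p : list R) : list R := map (Rmult k) p.

Lemma horner_padd p q u : horner (padd p q) u = horner p u + horner q u.
Proof. revert q. induction p as [|a p IH]; intros [|b q]; simpl; try rewrite IH; ring. Qed.

Lemma length_padd p q : length (padd p q) = Nat.max (length p) (length q).
Proof. revert q. induction p as [|a p IH]; intros [|b q]; simpl; auto. Qed.

Lemma horner_pscal k p u : horner (pscal k p) u = k * horner p u.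
Proof. induction p as [|a p IH]; simpl; [|rewrite IH]; ring. Qed.

(* Polynomials of degree < n in the variable 1 + t, seen on [-1, 1) only:
   there the factors 1 + y t with -1 <= y < 1 do not vanish, and t = -1
   still picks out the constant coefficient. *)
Definition poly_lt (n : nat) (f : R -> R) : Prop :=
  exists p, (length p <= n)%nat /\ forall t, -1 <= t < 1 -> f t = horner p (1 + t).

Lemma poly_lt_ext n f g :
  poly_lt n f -> (forall t, -1 <= t < 1 -> f t = g t) -> poly_lt n g.
Proof.
  intros [p [Hp Ef]] Efg. exists p. split; [exact Hp|].
  intros t Ht. rewrite <- Efg by exact Ht. now apply Ef.
Qed.

Lemma poly_lt_const a : poly_lt 1 (fun _ => a).
Proof. exists (a :: nil). split; [simpl; lia | intros t _; simpl; ring]. Qed.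

Lemma poly_lt_plus n f g :
  poly_lt n f -> poly_lt n g -> poly_lt n (fun t => f t + g t).
Proof.
  intros [p [Hp Ef]] [q [Hq Eg]]. exists (padd p q).
  rewrite length_padd. split; [lia|].
  intros t Ht. now rewrite horner_padd, <- Ef, <- Eg.
Qed.

Lemma poly_lt_scal n k f : poly_lt n f -> poly_lt n (fun t => k * f t).
Proof.
  intros [p [Hp Ef]]. exists (pscal k p).
  unfold pscal. rewrite length_map. split; [exact Hp|].
  intros t Ht. fold (pscal k p). now rewrite horner_pscal, <- Ef.
Qed.

Lemma poly_lt_mult_lin n f y :
  poly_lt n f -> poly_lt (S n) (fun t => f t * (1 + y * t)).
Proof.
  intros [p [Hp Ef]]. exists (padd (pscal (1 - y) p) (0 :: pscal y p)).
  rewrite length_padd. unfold pscal. simpl. rewrite !length_map. split; [lia|].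
  intros t Ht. fold (pscal (1 - y) p) (pscal y p).
  rewrite horner_padd. simpl. rewrite !horner_pscal, <- Ef by exact Ht. ring.
Qed.

Lemma poly_lt_mult_pow n k f y :
  poly_lt n f -> poly_lt (n + k) (fun t => f t * (1 + y * t) ^ k).
Proof.
  intros Hf. induction k as [|k IH].
  - rewrite Nat.add_0_r. apply (poly_lt_ext _ _ _ Hf). intros t _. simpl. ring.
  - rewrite Nat.add_succ_r.
    apply (poly_lt_ext _ _ _ (poly_lt_mult_lin _ _ y IH)). intros t _. simpl. ring.
Qed.

Lemma list_sum_map_seq_S (e : nat -> nat) n :
  list_sum (map e (seq 0 (S n))) = (list_sum (map e (seq 0 n)) + e n)%nat.
Proof. rewrite seq_S, map_app, list_sum_app. simpl. lia. Qed.

Lemma poly_lt_prod I (y : nat -> R) (e : nat -> nat) :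
  poly_lt (S (list_sum (map e (seq 0 I))))
          (fun t => prod_upto I (fun a => (1 + y a * t) ^ e a)).
Proof.
  induction I as [|I IH]; [exact (poly_lt_const 1)|].
  rewrite list_sum_map_seq_S, <- Nat.add_succ_l.
  exact (poly_lt_mult_pow _ _ _ (y I) IH).
Qed.

Lemma lin_pos y t : -1 <= y < 1 -> -1 <= t < 1 -> 0 < 1 + y * t.
Proof. intros Hy Ht. nra. Qed.

(* The factor (1 + y t)^e contributes y e sigma (1 + y t)^(e - 1) P, a term of
   the same degree, to the weighted logarithmic derivative. *)
Lemma poly_lt_logderiv_step n u P y e sigma :
  -1 <= y < 1 -> poly_lt n (fun t => u t * P t) -> poly_lt (S n) P ->
  poly_lt (n + e)
    (fun t => (u t + y * INR e * sigma / (1 + y * t)) * (P t * (1 + y * t) ^ e)).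
Proof.
  intros Hy HuP HP. destruct e as [|e].
  - rewrite Nat.add_0_r. apply (poly_lt_ext _ _ _ HuP).
    intros t _. unfold Rdiv. simpl. ring.
  - assert (H1 := poly_lt_mult_pow _ (S e) _ y HuP).
    assert (H2 := poly_lt_scal _ (y * INR (S e) * sigma) _ (poly_lt_mult_pow _ e _ y HP)).
    rewrite Nat.add_succ_comm in H2.
    apply (poly_lt_ext _ _ _ (poly_lt_plus _ _ _ H1 H2)). intros t Ht.
    assert (0 < 1 + y * t) by now apply lin_pos.
    simpl pow. field. lra.
Qed.

Lemma poly_lt_logderiv I (y sigma : nat -> R) (e : nat -> nat) :
  (forall a, (a < I)%nat -> -1 <= y a < 1) ->
  poly_lt (list_sum (map e (seq 0 I)))
    (fun t => sum_upto I (fun a => y a * INR (e a) * sigma a / (1 + y a * t))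
              * prod_upto I (fun a => (1 + y a * t) ^ e a)).
Proof.
  induction I as [|I IH]; intros Hy.
  - exists nil. split; [simpl; lia | intros t _; simpl; ring].
  - rewrite list_sum_map_seq_S.
    apply (poly_lt_logderiv_step _ _ _ (y I) (e I) (sigma I)); [apply Hy; lia| |].
    + apply IH. intros a Ha. apply Hy. lia.
    + apply poly_lt_prod.
Qed.

(** * Asymptotics at c = 1 *)

Lemma horner_integral p : forall k L, (k + length p + 1 <= L)%nat ->
  exists G, ratpos G /\ G 1 = moment k (L - k - 2) 1 * horner p 0 /\
    forall c, 0 < c < 1 ->
      is_RInt (fun t => (1 + t) ^ k * horner p (1 + t) / (1 + c * t) ^ L) (-1) 1
              (G c / (1 - c) ^ (L - k - 1)).
Proof.
  induction p as [|a p IH]; intros k L HL.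
  - exists (fun _ => 0). split; [apply ratpos_const|]. split; [simpl; ring|].
    intros c _. replace (0 / (1 - c) ^ (L - k - 1)) with (scal (1 - -1) 0)
      by (unfold scal; simpl; unfold mult; simpl; unfold Rdiv; ring).
    eapply is_RInt_ext_pm1; [|apply (is_RInt_const (-1) 1 0)].
    intros t _. simpl. unfold Rdiv. ring.
  - simpl in HL. destruct (IH (S k) L ltac:(lia)) as [G [HG [G1 IG]]].
    exists (fun c => a * moment k (L - k - 2) c + (1 - c) * G c).
    split; [|split].
    + apply ratpos_plus; apply ratpos_mult; auto using ratpos_const, ratpos_moment, ratpos_one_minus.
    + rewrite G1. simpl. ring.
    + intros c Hc.
      assert (Hm := is_RInt_scal _ _ _ a _ (is_RInt_moment k (L - k - 2) c Hc)).
      replace (L - k - 2 + k + 2)%nat with L in Hm by lia.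
      replace ((a * moment k (L - k - 2) c + (1 - c) * G c) / (1 - c) ^ (L - k - 1))
        with (plus (scal a (moment k (L - k - 2) c / (1 - c) ^ S (L - k - 2)))
                   (G c / (1 - c) ^ (L - S k - 1))).
      * eapply is_RInt_ext_pm1; [|exact (is_RInt_plus _ _ _ _ _ _ Hm (IG c Hc))].
        intros t _. unfold scal, plus; simpl; unfold mult; simpl. unfold Rdiv. ring.
      * unfold scal, plus; simpl; unfold mult; simpl.
        replace (L - k - 1)%nat with (S (L - k - 2)) by lia.
        replace (L - S k - 1)%nat with (L - k - 2)%nat by lia.
        simpl pow. field. split; [apply pow_nonzero|]; lra.
Qed.

Lemma poly_lt_integral n f k L : poly_lt n f -> (k + n + 1 <= L)%nat ->
  exists G, ratpos G /\ G 1 = moment k (L - k - 2) 1 * f (-1) /\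
    forall c, 0 < c < 1 ->
      is_RInt (fun t => (1 + t) ^ k * f t / (1 + c * t) ^ L) (-1) 1
              (G c / (1 - c) ^ (L - k - 1)).
Proof.
  intros [p [Hp Ef]] HL.
  destruct (horner_integral p k L ltac:(lia)) as [G [HG [G1 IG]]].
  exists G. split; [exact HG|]. split.
  - rewrite G1, Ef by lra. do 2 f_equal. ring.
  - intros c Hc. eapply is_RInt_ext_pm1; [|exact (IG c Hc)].
    intros t Ht. rewrite Ef by lra. reflexivity.
Qed.

Lemma prod_upto_pos n f : (forall a, (a < n)%nat -> 0 < f a) -> 0 < prod_upto n f.
Proof.
  induction n as [|n IH]; intros Hf; simpl; [lra|].
  apply Rmult_lt_0_compat; [apply IH; intros; apply Hf|apply Hf]; lia.
Qed.

(* [pc_rest] and [Ssum_rest] are [p_c] and the sum in [beta] with the index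
   [0] of the paper removed. *)
Definition pc_rest I (x : nat -> R) (d : nat -> nat) (dinf : nat) (t : R) : R :=
  prod_upto I (fun a => (1 + x a * t) ^ d a) * (1 + (-1) * t) ^ dinf.

Definition Ssum_rest I (x s : nat -> R) (d : nat -> nat) (dinf : nat) (t : R) : R :=
  sum_upto I (fun a => x a * INR (d a) * s a / (1 + x a * t))
  + (-1) * INR dinf * (- (INR dinf + 1)) / (1 + (-1) * t).

Lemma pc_split I x d d0 dinf t :
  pc I x d d0 dinf t = (1 + t) ^ d0 * pc_rest I x d dinf t.
Proof. unfold pc, pc_rest. rewrite Rmult_1_l. ring. Qed.

Lemma Ssum_pc_split I x s d d0 dinf t : -1 < t < 1 ->
  Ssum I x s d d0 dinf t * pc I x d d0 dinf t
  = (1 + t) ^ d0 * (Ssum_rest I x s d dinf t * pc_rest I x d dinf t)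
    + INR d0 * (INR d0 + 1) * (1 + t) ^ pred d0 * pc_rest I x d dinf t.
Proof.
  intros Ht. rewrite pc_split.
  replace (Ssum I x s d d0 dinf t)
    with (Ssum_rest I x s d dinf t + INR d0 * (INR d0 + 1) / (1 + t))
    by (unfold Ssum, Ssum_rest; rewrite !Rmult_1_l; ring).
  destruct d0 as [|D]; simpl; field; lra.
Qed.

Lemma pc_rest_pos I x d dinf :
  (forall a, (a < I)%nat -> -1 < x a < 1) -> 0 < pc_rest I x d dinf (-1).
Proof.
  intros Hx. unfold pc_rest. apply Rmult_lt_0_compat; [|apply pow_lt; lra].
  apply prod_upto_pos. intros a Ha. specialize (Hx a Ha). apply pow_lt. lra.
Qed.

Lemma poly_lt_pc_rest I x d dinf :
  poly_lt (S (list_sum (map d (seq 0 I)) + dinf)) (pc_rest I x d dinf).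
Proof. exact (poly_lt_mult_pow _ dinf _ (-1) (poly_lt_prod I x d)). Qed.

Lemma poly_lt_Ssum_pc_rest I x s d dinf :
  (forall a, (a < I)%nat -> -1 < x a < 1) ->
  poly_lt (list_sum (map d (seq 0 I)) + dinf)
          (fun t => Ssum_rest I x s d dinf t * pc_rest I x d dinf t).
Proof.
  intros Hx. apply (poly_lt_logderiv_step _ _ _ (-1) dinf (- (INR dinf + 1))); [lra| |].
  - apply poly_lt_logderiv. intros a Ha. specialize (Hx a Ha). lra.
  - apply poly_lt_prod.
Qed.

Lemma powerRZ_opp_nat y l : powerRZ y (- Z.of_nat l) = / y ^ l.
Proof. now rewrite powerRZ_neg', pow_powerRZ. Qed.

Lemma beta_as_integral I x s d d0 dinf l c v :
  is_RInt (fun t => Ssum I x s d d0 dinf t * pc I x d d0 dinf t / (1 + c * t) ^ l)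
          (-1) 1 v ->
  beta I x s d d0 dinf 0 (- Z.of_nat l) c
  = v + pc I x d d0 dinf (-1) / (1 - c) ^ l + pc I x d d0 dinf 1 / (1 + c) ^ l.
Proof.
  intros Hv. unfold beta.
  assert (Hv' : is_RInt (fun t => Ssum I x s d d0 dinf t * pc I x d d0 dinf t * t ^ 0
                                  * powerRZ (c * t + 1) (- Z.of_nat l)) (-1) 1 v).
  { eapply is_RInt_ext_pm1; [|exact Hv].
    intros t _. rewrite powerRZ_opp_nat. replace (c * t + 1) with (1 + c * t) by ring.
    simpl. unfold Rdiv. ring. }
  rewrite (is_RInt_unique _ _ _ _ Hv'), !powerRZ_opp_nat. simpl. unfold Rdiv. ring.
Qed.

Lemma ratpos_boundary_coef k l a : ratpos (fun c => (1 - c) ^ k * (/ (1 + c)) ^ l * a).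
Proof.
  repeat apply ratpos_mult;
    auto using ratpos_pow, ratpos_const, ratpos_one_minus, ratpos_inv_one_plus.
Qed.

(* When d0 = 0 the boundary term [p_c(-1)] carries the leading order. *)
Lemma beta_near_1_d0_0 I x s d dinf l :
  (forall a, (a < I)%nat -> -1 < x a < 1) ->
  (list_sum (map d (seq 0 I)) + dinf + 1 <= l)%nat ->
  exists g, ratpos g /\ 0 < g 1 /\ forall c, 0 < c < 1 ->
    beta I x s d 0 dinf 0 (- Z.of_nat l) c = g c / (1 - c) ^ l.
Proof.
  intros Hx Hl.
  destruct (poly_lt_integral _ _ 0 l (poly_lt_Ssum_pc_rest I x s d dinf Hx) ltac:(lia))
    as [G [HG [_ IG]]].
  exists (fun c => (1 - c) * G c + pc I x d 0 dinf (-1)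
                   + (1 - c) ^ l * (/ (1 + c)) ^ l * pc I x d 0 dinf 1).
  split; [|split].
  - apply ratpos_plus; [apply ratpos_plus|]; [|apply ratpos_const|apply ratpos_boundary_coef].
    apply ratpos_mult; [apply ratpos_one_minus | exact HG].
  - rewrite pc_split. replace (1 - 1) with 0 by ring. rewrite pow_i by lia. simpl.
    pose proof (pc_rest_pos I x d dinf Hx). lra.
  - intros c Hc. rewrite (beta_as_integral _ _ _ _ _ _ _ _ (G c / (1 - c) ^ (l - 0 - 1))).
    + destruct l as [|l]; [lia|]. rewrite pow_inv. simpl. replace (l - 0)%nat with l by lia.
      field. repeat split; try apply pow_nonzero; lra.
    + eapply is_RInt_ext_pm1; [|exact (IG c Hc)].
      intros t Ht. rewrite Ssum_pc_split by lra. simpl. unfold Rdiv. ring.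
Qed.

Lemma beta_near_1_d0_S I x s d D dinf l :
  (forall a, (a < I)%nat -> -1 < x a < 1) ->
  (list_sum (map d (seq 0 I)) + S D + dinf + 1 <= l)%nat ->
  exists g, ratpos g /\ 0 < g 1 /\ forall c, 0 < c < 1 ->
    beta I x s d (S D) dinf 0 (- Z.of_nat l) c = g c / (1 - c) ^ (l - S D).
Proof.
  intros Hx Hl.
  (* [Ssum * pc = (1 + t)^D * f] by [Ssum_pc_split], with [f(-1) > 0]. *)
  set (f t := Ssum_rest I x s d dinf t * pc_rest I x d dinf t * (1 + 1 * t)
               + INR (S D) * (INR (S D) + 1) * pc_rest I x d dinf t).
  assert (Hf : poly_lt (S (list_sum (map d (seq 0 I)) + dinf)) f).
  { apply poly_lt_plus; [apply poly_lt_mult_lin, poly_lt_Ssum_pc_rest, Hx|].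
    apply poly_lt_scal, poly_lt_pc_rest. }
  destruct (poly_lt_integral _ _ D l Hf ltac:(lia)) as [G [HG [G1 IG]]].
  exists (fun c => G c + (1 - c) ^ (l - S D) * (/ (1 + c)) ^ l * pc I x d (S D) dinf 1).
  split; [|split].
  - apply ratpos_plus; [exact HG | apply ratpos_boundary_coef].
  - replace (1 - 1) with 0 by ring. rewrite (pow_i (l - S D)) by lia.
    rewrite G1. unfold f. replace (1 + 1 * -1) with 0 by ring.
    assert (0 < moment D (l - D - 2) 1) by apply moment_at_1_pos.
    assert (0 < INR (S D)) by apply lt_0_INR, Nat.lt_0_succ.
    pose proof (pc_rest_pos I x d dinf Hx).
    assert (0 < INR (S D) * (INR (S D) + 1) * pc_rest I x d dinf (-1))
      by (apply Rmult_lt_0_compat; [apply Rmult_lt_0_compat|]; lra).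
    rewrite Rmult_0_r, Rplus_0_l. nra.
  - intros c Hc. rewrite (beta_as_integral _ _ _ _ _ _ _ _ (G c / (1 - c) ^ (l - D - 1))).
    + rewrite pc_split. replace (1 + -1) with 0 by ring. rewrite pow_i by lia.
      replace (l - D - 1)%nat with (l - S D)%nat by lia. rewrite pow_inv.
      field. repeat split; try apply pow_nonzero; lra.
    + eapply is_RInt_ext_pm1; [|exact (IG c Hc)].
      intros t Ht. rewrite Ssum_pc_split by lra. unfold f. simpl. unfold Rdiv. ring.
Qed.

Lemma beta_near_1 I x s d d0 dinf l :
  (forall a, (a < I)%nat -> -1 < x a < 1) -> (m_of I d d0 dinf <= l)%nat ->
  exists g, ratpos g /\ 0 < g 1 /\ forall c, 0 < c < 1 ->
    beta I x s d d0 dinf 0 (- Z.of_nat l) c = g c / (1 - c) ^ (l - d0).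
Proof.
  intros Hx Hl.
  change (m_of I d d0 dinf) with (list_sum (map d (seq 0 I)) + d0 + dinf + 1)%nat in Hl.
  destruct d0 as [|D].
  - rewrite Nat.sub_0_r. apply beta_near_1_d0_0; [exact Hx | lia].
  - now apply beta_near_1_d0_S.
Qed.

(** * The symmetry t -> -t *)

Lemma is_RInt_comp_opp_iff (f : R -> R) a b v :
  is_RInt (fun t => f (- t)) a b v <-> is_RInt f (- b) (- a) v.
Proof.
  split; intros H.
  - rewrite <- (Ropp_involutive a), <- (Ropp_involutive b) in H.
    apply is_RInt_comp_opp, is_RInt_swap, is_RInt_opp in H. rewrite opp_opp in H.
    eapply is_RInt_ext; [|exact H]. intros t _. cbv beta. now rewrite !Ropp_involutive.
  - apply is_RInt_swap, is_RInt_comp_opp in H.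
    apply is_RInt_opp in H. rewrite opp_opp in H.
    eapply is_RInt_ext; [|exact H]. intros t _. cbv beta. apply opp_opp.
Qed.

Lemma RInt_comp_opp (f : R -> R) a b : RInt (fun t => f (- t)) a b = RInt f (- b) (- a).
Proof.
  apply (eq_close (K := R_AbsRing) (V := R_NormedModule)).
  exact (close_iota (T := R_CompleteSpace) _ _ (is_RInt_comp_opp_iff f a b)).
Qed.

Lemma RInt_comp_opp_pm1 (f : R -> R) : RInt f (-1) 1 = RInt (fun t => f (- t)) (-1) 1.
Proof. rewrite RInt_comp_opp. f_equal; ring. Qed.

Lemma prod_upto_ext n f g : (forall a, f a = g a) -> prod_upto n f = prod_upto n g.
Proof. intros E. induction n as [|n IH]; simpl; congruence. Qed.

Lemma sum_upto_ext n f g : (forall a, f a = g a) -> sum_upto n f = sum_upto n g.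
Proof. intros E. induction n as [|n IH]; simpl; congruence. Qed.

Lemma pc_opp I x d d0 dinf t :
  pc I x d d0 dinf t = pc I (fun a => - x a) d dinf d0 (- t).
Proof.
  unfold pc. rewrite (prod_upto_ext I _ (fun a => (1 + - x a * - t) ^ d a))
    by (intros a; f_equal; ring).
  replace (1 + -1 * - t) with (1 + 1 * t) by ring.
  replace (1 + 1 * - t) with (1 + -1 * t) by ring. ring.
Qed.

Lemma Ssum_opp I x s d d0 dinf t :
  Ssum I x s d d0 dinf t = Ssum I (fun a => - x a) (fun a => - s a) d dinf d0 (- t).
Proof.
  unfold Ssum.
  rewrite (sum_upto_ext I _ (fun a => - x a * INR (d a) * - s a / (1 + - x a * - t)))
    by (intros a; replace (1 + - x a * - t) with (1 + x a * t) by ring; unfold Rdiv; ring).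
  replace (1 + -1 * - t) with (1 + 1 * t) by ring.
  replace (1 + 1 * - t) with (1 + -1 * t) by ring.
  unfold Rdiv. ring.
Qed.

Lemma beta_opp I x s d d0 dinf k c :
  beta I x s d d0 dinf 0 k c
  = beta I (fun a => - x a) (fun a => - s a) d dinf d0 0 k (- c).
Proof.
  unfold beta. symmetry.
  rewrite RInt_comp_opp_pm1, (pc_opp I x d d0 dinf (-1)), (pc_opp I x d d0 dinf 1).
  f_equal.
  - apply RInt_ext. intros t _.
    rewrite (Ssum_opp I x s d d0 dinf t), (pc_opp I x d d0 dinf t).
    replace (- c * - t) with (c * t) by ring. simpl. ring.
  - replace (1 - - c) with (1 + c) by ring. replace (1 + - c) with (1 - c) by ring.
    replace (- -1) with 1 by ring. replace (- (1)) with (-1) by ring. simpl. ring.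
Qed.

Lemma smooth_near_const a x0 : smooth_near (fun _ => a) x0.
Proof. exists 1. split; [lra|]. intros n y _. apply ex_derive_n_const. Qed.

Lemma beta_near_neg1 I x s d d0 dinf l :
  (forall a, (a < I)%nat -> -1 < x a < 1) -> (m_of I d d0 dinf <= l)%nat ->
  exists g, smooth_near g (-1) /\ 0 < g (-1) /\ forall c, -1 < c < 0 ->
    beta I x s d d0 dinf 0 (- Z.of_nat l) c = g c / (1 + c) ^ (l - dinf).
Proof.
  intros Hx Hl.
  assert (Hx' : forall a, (a < I)%nat -> -1 < - x a < 1)
    by (intros a Ha; specialize (Hx a Ha); lra).
  assert (Hl' : (m_of I d dinf d0 <= l)%nat) by (unfold m_of in *; lia).
  destruct (beta_near_1 I _ (fun a => - s a) d dinf d0 l Hx' Hl') as [g [Hg [Hg1 Eg]]].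
  exists (fun c => g (- c)). split; [|split].
  - replace (-1) with (- (1)) by ring. now apply smooth_near_comp_opp, ratpos_smooth_near.
  - now replace (- -1) with 1 by ring.
  - intros c Hc. rewrite beta_opp, Eg by lra. now replace (1 - - c) with (1 + c) by ring.
Qed.

Theorem lemmaA3 (I : nat) (d : nat -> nat) (d0 dinf : nat) (x s : nat -> R) (l : nat) :
  (1 <= I)%nat ->
  (forall a, (a < I)%nat -> (1 <= d a)%nat) ->
  (forall a, (a < I)%nat -> 0 < Rabs (x a) < 1) ->
  (m_of I d d0 dinf <= l)%nat ->
  (exists (gamma0 o0 : R -> R),
      smooth_near gamma0 1 /\ smooth_near o0 0 /\ o0 0 = 0 /\ 0 < gamma0 1 /\
      exists eps : R, 0 < eps /\
        forall c, 1 - eps < c < 1 ->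
          beta I x s d d0 dinf 0 (- Z.of_nat l) c
          = (gamma0 c + o0 (1 - c)) / (1 - c) ^ (l - d0)) /\
  (exists (gammainf oinf : R -> R),
      smooth_near gammainf (-1) /\ smooth_near oinf 0 /\ oinf 0 = 0 /\ 0 < gammainf (-1) /\
      exists eps : R, 0 < eps /\
        forall c, -1 < c < -1 + eps ->
          beta I x s d d0 dinf 0 (- Z.of_nat l) c
          = (gammainf c + oinf (1 + c)) / (1 + c) ^ (l - dinf)).
Proof.
  intros _ _ Hx Hl.
  assert (Hx1 : forall a, (a < I)%nat -> -1 < x a < 1)
    by (intros a Ha; destruct (Hx a Ha) as [_ H]; apply Rabs_def2 in H; lra).
  split.
  - destruct (beta_near_1 I x s d d0 dinf l Hx1 Hl) as [g [Hg [Hg1 Eg]]].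
    exists g, (fun _ => 0). repeat split; auto using ratpos_smooth_near, smooth_near_const.
    exists 1. split; [lra|]. intros c Hc. rewrite Rplus_0_r. apply Eg. lra.
  - destruct (beta_near_neg1 I x s d d0 dinf l Hx1 Hl) as [g [Hg [Hg1 Eg]]].
    exists g, (fun _ => 0). repeat split; auto using smooth_near_const.
    exists 1. split; [lra|]. intros c Hc. rewrite Rplus_0_r. apply Eg. lra.
Qed.
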